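(* Let $A(n) = \sum_{k=0}^{n} \binom{n}{k}^2 \binom{n+k}{k}^2$ for integers $n \geq 0$ (the Apéry numbers). Then for every $n \geq 0$, $A(n)$ equals the coefficient of $x_1^n x_2^n x_3^n x_4^n$ in the Taylor expansion at the origin of the rational function $$\frac{1}{(1 - x_1 - x_2)(1 - x_3 - x_4) - x_1 x_2 x_3 x_4}.$$ *)

From HB Require Import structures.
From mathcomp Require Import all_boot all_order all_algebra.
Set Implicit Arguments. Unset Strict Implicit. Unset Printing Implicit Defensive.
Import Order.TTheory GRing.Theory Num.Theory.
Local Open Scope ring_scope.

(* s a b c d = coefficient of x1^a x2^b x3^c x4^d *)
Definition series4 := nat -> nat -> nat -> nat -> int.

Definition s_one : series4 :=
  fun a b c d => if [&& a == 0%N, b == 0%N, c == 0%N & d == 0%N] then 1 else 0.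

Definition s_add (f g : series4) : series4 := fun a b c d => f a b c d + g a b c d.
Definition s_opp (f : series4) : series4 := fun a b c d => - f a b c d.
Definition s_sub (f g : series4) : series4 := s_add f (s_opp g).

Definition s_mul (f g : series4) : series4 := fun a b c d =>
  \sum_(i < a.+1) \sum_(j < b.+1) \sum_(k < c.+1) \sum_(l < d.+1)
     f i j k l * g (a - i)%N (b - j)%N (c - k)%N (d - l)%N.

Definition X1 : series4 := fun a b c d =>
  if [&& a == 1%N, b == 0%N, c == 0%N & d == 0%N] then 1 else 0.
Definition X2 : series4 := fun a b c d =>
  if [&& a == 0%N, b == 1%N, c == 0%N & d == 0%N] then 1 else 0.
Definition X3 : series4 := fun a b c d =>
  if [&& a == 0%N, b == 0%N, c == 1%N & d == 0%N] then 1 else 0.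
Definition X4 : series4 := fun a b c d =>
  if [&& a == 0%N, b == 0%N, c == 0%N & d == 1%N] then 1 else 0.

Definition denom : series4 :=
  s_sub (s_mul (s_sub (s_sub s_one X1) X2) (s_sub (s_sub s_one X3) X4))
        (s_mul (s_mul X1 X2) (s_mul X3 X4)).

Definition apery (n : nat) : nat :=
  (\sum_(0 <= k < n.+1) 'C(n, k) ^ 2 * 'C(n + k, k) ^ 2)%N.

(* Write D for the denominator and u_j(x,y) = (xy)^j / (1-x-y)^(j+1), whose
   coefficient of x^a y^b is the trinomial (a+b-j)! / ((a-j)! (b-j)! j!).
   Expanding 1/D as a geometric series in x1x2x3x4 / ((1-x1-x2)(1-x3-x4))
   gives the candidate inverse  G = sum_j u_j(x1,x2) u_j(x3,x4).

   Since the
   constant term of D is 1, this shows by induction on the total degree that D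
   has no zero divisor (denom_mul_eq0), hence the inverse is unique.
   Existence rests on two identities for u_j, namely (1-x-y) u_0 = 1 and
   (1-x-y) u_(j+1) = xy u_j (pascal_ucoef0, pascal_ucoefS), both instances of
   Pascal's rule; with them D*G becomes a telescoping sum equal to 1.
   Finally the diagonal coefficient of G is sum_j trinom(n-j, n-j, j)^2, which
   is the Apéry number after the substitution k = n - j. *)

From HB Require Import structures.
From mathcomp Require Import all_boot all_order all_algebra.
From mathcomp Require Import zify ring.
From Stdlib Require Import FunctionalExtensionality.
Set Implicit Arguments. Unset Strict Implicit. Unset Printing Implicit Defensive.
Import Order.TTheory GRing.Theory Num.Theory.
Local Open Scope ring_scope.

Lemma series_ext (f g : series4) :
  (forall a b c d, f a b c d = g a b c d) -> f = g.
Proof.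
move=> fg; do 4 apply: functional_extensionality => ?; exact: fg.
Qed.

Lemma s_mulDl f g h : s_mul (s_add f g) h = s_add (s_mul f h) (s_mul g h).
Proof.
apply: series_ext => a b c d; rewrite /s_mul /s_add.
by do 4 (rewrite -big_split; apply: eq_bigr => ? _); rewrite mulrDl.
Qed.

Lemma s_mulNl f h : s_mul (s_opp f) h = s_opp (s_mul f h).
Proof.
apply: series_ext => a b c d; rewrite /s_mul /s_opp.
by do 4 (rewrite -sumrN; apply: eq_bigr => ? _); rewrite mulNr.
Qed.

Lemma s_mulDr f g h : s_mul f (s_add g h) = s_add (s_mul f g) (s_mul f h).
Proof.
apply: series_ext => a b c d; rewrite /s_mul /s_add.
by do 4 (rewrite -big_split; apply: eq_bigr => ? _); rewrite mulrDr.
Qed.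

Lemma s_mulNr f h : s_mul f (s_opp h) = s_opp (s_mul f h).
Proof.
apply: series_ext => a b c d; rewrite /s_mul /s_opp.
by do 4 (rewrite -sumrN; apply: eq_bigr => ? _); rewrite mulrN.
Qed.

Definition mono (e1 e2 e3 e4 : nat) : series4 := fun a b c d =>
  if [&& a == e1, b == e2, c == e3 & d == e4] then 1 else 0.

Definition shift (F : series4) (e1 e2 e3 e4 : nat) : series4 := fun a b c d =>
  if [&& e1 <= a, e2 <= b, e3 <= c & e4 <= d]%N then
    F (a - e1)%N (b - e2)%N (c - e3)%N (d - e4)%N
  else 0.

Lemma shift0 F : shift F 0 0 0 0 = F.
Proof. by apply: series_ext => a b c d; rewrite /shift /= !subn0. Qed.

Lemma sum_pick (h : nat -> int) e a :
  \sum_(i < a.+1) (if nat_of_ord i == e then h i else 0) =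
  if (e <= a)%N then h e else 0.
Proof.
case: leqP => [le_ea | lt_ae].
  rewrite (bigD1 (Ordinal (le_ea : (e < a.+1)%N))) //= eqxx big1 ?addr0 // => i ne_ie.
  by rewrite ifF //; apply: contraNF ne_ie => /eqP ie; apply/eqP/val_inj.
by rewrite big1 // => i _; rewrite ifF // ltn_eqF // (leq_trans (ltn_ord i)).
Qed.

Lemma mul_mono e1 e2 e3 e4 g :
  s_mul (mono e1 e2 e3 e4) g = shift g e1 e2 e3 e4.
Proof.
apply: series_ext => a b c d; rewrite /s_mul /mono /shift.
transitivity (\sum_(i < a.+1) if nat_of_ord i == e1 then
   \sum_(j < b.+1) if nat_of_ord j == e2 then
   \sum_(k < c.+1) if nat_of_ord k == e3 then
   \sum_(l < d.+1) if nat_of_ord l == e4 then g (a-i)%N (b-j)%N (c-k)%N (d-l)%N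
   else 0 else 0 else 0 else 0).
  apply: eq_bigr => i _; case: eqP => _ /=; last first.
    by rewrite big1 // => j _; rewrite big1 // => k _; rewrite big1 // => l _; rewrite mul0r.
  apply: eq_bigr => j _; case: eqP => _ /=; last first.
    by rewrite big1 // => k _; rewrite big1 // => l _; rewrite mul0r.
  apply: eq_bigr => k _; case: eqP => _ /=; last by rewrite big1 // => l _; rewrite mul0r.
  by apply: eq_bigr => l _; case: eqP; rewrite ?mul1r ?mul0r.
under eq_bigr => i _ do under eq_bigr => j _ do under eq_bigr => k _ do
  rewrite (sum_pick (fun l => g (a - i) (b - j) (c - k) (d - l))%N).
under eq_bigr => i _ do under eq_bigr => j _ do rewrite (sum_pick (fun k =>
  if (e4 <= d)%N then g (a - i) (b - j) (c - k) (d - e4) else 0)%N).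
under eq_bigr => i _ do rewrite (sum_pick (fun j => if (e3 <= c)%N then
  if (e4 <= d)%N then g (a - i) (b - j) (c - e3) (d - e4) else 0 else 0)%N).
rewrite (sum_pick (fun i => if (e2 <= b)%N then if (e3 <= c)%N then
  if (e4 <= d)%N then g (a - i) (b - e2) (c - e3) (d - e4) else 0 else 0 else 0)%N).
by case: (e1 <= a)%N; case: (e2 <= b)%N; case: (e3 <= c)%N; case: (e4 <= d)%N.
Qed.

Lemma eqn_addl_sub x e f : (x == e + f)%N = (e <= x)%N && (x - e == f)%N.
Proof.
case: leqP => [le_ex | lt_xe] /=; first by rewrite -(eqn_add2l e (x - e)) subnKC.
by apply/negbTE; rewrite neq_ltn (leq_trans lt_xe (leq_addr f e)).
Qed.

Lemma mono_mul e1 e2 e3 e4 f1 f2 f3 f4 :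
  s_mul (mono e1 e2 e3 e4) (mono f1 f2 f3 f4) =
  mono (e1 + f1) (e2 + f2) (e3 + f3) (e4 + f4).
Proof.
apply: series_ext => a b c d; rewrite mul_mono /shift /mono !eqn_addl_sub.
by case: (e1 <= a)%N; case: (e2 <= b)%N; case: (e3 <= c)%N; case: (e4 <= d)%N;
  rewrite /= ?andbF.
Qed.

Lemma denom_mul F a b c d : s_mul denom F a b c d =
  shift F 0 0 0 0 a b c d - shift F 1 0 0 0 a b c d - shift F 0 1 0 0 a b c d
  - shift F 0 0 1 0 a b c d - shift F 0 0 0 1 a b c d
  + shift F 1 0 1 0 a b c d + shift F 1 0 0 1 a b c d
  + shift F 0 1 1 0 a b c d + shift F 0 1 0 1 a b c d
  - shift F 1 1 1 1 a b c d.
Proof.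
have -> : denom = s_sub
   (s_mul (s_sub (s_sub (mono 0 0 0 0) (mono 1 0 0 0)) (mono 0 1 0 0))
          (s_sub (s_sub (mono 0 0 0 0) (mono 0 0 1 0)) (mono 0 0 0 1)))
   (s_mul (s_mul (mono 1 0 0 0) (mono 0 1 0 0))
          (s_mul (mono 0 0 1 0) (mono 0 0 0 1))) by [].
rewrite /s_sub !(s_mulDl, s_mulDr, s_mulNl, s_mulNr, mono_mul) !mul_mono.
by rewrite /s_add /s_opp /=; ring.
Qed.

(* D is not a zero divisor: the constant term of D is 1, so each coefficient
   of H is determined by coefficients of strictly smaller total degree. *)
Lemma denom_mul_eq0 (H : series4) :
  (forall a b c d, s_mul denom H a b c d = 0) -> forall a b c d, H a b c d = 0.
Proof.
move=> denomH0 a b c d; move En: (a + b + c + d)%N => n.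
elim/ltn_ind: n a b c d En => n IH a b c d En.
have lower e1 e2 e3 e4 : (0 < e1 + e2 + e3 + e4)%N -> shift H e1 e2 e3 e4 a b c d = 0.
  move=> e_gt0; rewrite /shift; case: ifP => // /and4P[*].
  by apply: (IH (a - e1 + (b - e2) + (c - e3) + (d - e4))%N) => //; lia.
by have := denomH0 a b c d; rewrite denom_mul shift0 !lower // !subr0 ?addr0.
Qed.

Definition shift2 (u : nat -> nat -> int) (e1 e2 a b : nat) : int :=
  if (e1 <= a)%N && (e2 <= b)%N then u (a - e1)%N (b - e2)%N else 0.

Lemma shift2_00 u a b : shift2 u 0 0 a b = u a b.
Proof. by rewrite /shift2 !subn0. Qed.

Definition pascal (u : nat -> nat -> int) (a b : nat) : int :=
  u a b - shift2 u 1 0 a b - shift2 u 0 1 a b.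

Definition trinom (p q j : nat) : nat := ('C(p + q + j, p) * 'C(q + j, q))%N.

Lemma trinomS p q j : trinom p q j.+1 =
  ((if p is p'.+1 then trinom p' q j.+1 else 0) +
   (if q is q'.+1 then trinom p q' j.+1 else 0) + trinom p q j)%N.
Proof.
by case: p => [|p]; case: q => [|q];
  rewrite /trinom /= ?add0n ?addn0 ?addSn ?addnS ?bin0 ?binS; ring.
Qed.

(* The coefficient of x^a y^b in u_j = (xy)^j / (1-x-y)^(j+1). *)
Definition ucoef (j a b : nat) : int :=
  if (j <= a)%N && (j <= b)%N then (trinom (a - j) (b - j) j)%:Z else 0.

Lemma ucoef_add j p q : ucoef j (j + p) (j + q) = (trinom p q j)%:Z.
Proof. by rewrite /ucoef !leq_addr /= !addKn. Qed.

Lemma ucoef_ltl j a b : (a < j)%N -> ucoef j a b = 0.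
Proof. by move=> lt_aj; rewrite /ucoef leqNgt lt_aj. Qed.

Lemma ucoef_ltr j a b : (b < j)%N -> ucoef j a b = 0.
Proof. by move=> lt_bj; rewrite /ucoef [(j <= b)%N]leqNgt lt_bj andbF. Qed.

Lemma ucoef0 a b : ucoef 0 a b = ('C(a + b, a))%:Z.
Proof. by rewrite /ucoef !subn0 /trinom !addn0 binn muln1. Qed.

Lemma pascal_ucoef0 a b : pascal (ucoef 0) a b = ((a == 0%N) && (b == 0%N))%:R.
Proof.
rewrite /pascal /shift2 /=.
case: a => [|a]; case: b => [|b];
  rewrite /= ?subn1 ?subn0 /= !ucoef0 ?subr0 ?addn0 ?add0n ?binn ?bin0 ?subrr //.
by rewrite addSn addnS binS PoszD; ring.
Qed.

Lemma pascal_ucoefS j a b : pascal (ucoef j.+1) a b = shift2 (ucoef j) 1 1 a b.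
Proof.
rewrite /pascal /shift2 !subn0 /=.
case: a => [|a]; case: b => [|b]; rewrite /= ?subn1 /= ?subr0.
- by rewrite ucoef_ltl.
- by rewrite ucoef_ltl.
- by rewrite !ucoef_ltr // subrr.
case: (leqP j a) => [le_ja | lt_aj]; last by rewrite !ucoef_ltl // ?subrr; exact: ltnW.
case: (leqP j b) => [le_jb | lt_bj]; last by rewrite !ucoef_ltr // ?subrr; exact: ltnW.
rewrite -(subnKC le_ja) -(subnKC le_jb); move: (a - j)%N (b - j)%N => p q.
rewrite ucoef_add -!addSn ucoef_add trinomS !PoszD.
case: p => [|p]; case: q => [|q]; rewrite ?addn0 ?(addnS j) -?addSn ?ucoef_add.
- by rewrite ucoef_ltl // ucoef_ltr //; ring.
- by rewrite ucoef_ltl // -[X in ucoef _ X _]addn0 ucoef_add; ring.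
- by rewrite [X in _ - X]ucoef_ltr // -[X in ucoef _ _ X]addn0 ucoef_add; ring.
- by ring.
Qed.

(* The inverse G = sum_j u_j(x1,x2) u_j(x3,x4); the terms with j > a vanish,
   so the sum may be cut at a. *)
Definition inv_denom : series4 := fun a b c d =>
  \sum_(j < a.+1) ucoef j a b * ucoef j c d.

Lemma inv_denomE N a b c d : (a < N)%N ->
  inv_denom a b c d = \sum_(j < N) ucoef j a b * ucoef j c d.
Proof.
move=> lt_aN; rewrite /inv_denom -(subnKC lt_aN) big_split_ord /=.
by rewrite [X in _ = _ + X]big1 ?addr0 // => j _; rewrite ucoef_ltl ?mul0r // ltn_addr.
Qed.

Lemma shift_inv_denom e1 e2 e3 e4 a b c d :
  shift inv_denom e1 e2 e3 e4 a b c d =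
  \sum_(j < a.+2) shift2 (ucoef j) e1 e2 a b * shift2 (ucoef j) e3 e4 c d.
Proof.
rewrite /shift /shift2; case: ifP => [/and4P[-> -> -> ->] | out].
  by apply: inv_denomE; lia.
rewrite big1 // => j _; move: out.
by case: (e1 <= a)%N; case: (e2 <= b)%N; case: (e3 <= c)%N; case: (e4 <= d)%N;
  rewrite //= ?mul0r ?mulr0.
Qed.

Lemma telescope_ord (f : nat -> int) n :
  \sum_(j < n) (f j - f j.+1) = f 0%N - f n.
Proof.
under eq_bigr do rewrite -opprB.
by rewrite sumrN -(big_mkord xpredT (fun j => f j.+1 - f j)) telescope_sumr // opprB.
Qed.

(* D*G = 1: for each j the summand is (1-x1-x2)u_j (1-x3-x4)u_j - x1x2u_j x3x4u_j,
   which telescopes in j by pascal_ucoef0 and pascal_ucoefS. *)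
Lemma denom_mul_inv_denom : s_mul denom inv_denom = s_one.
Proof.
apply: series_ext => a b c d; rewrite denom_mul !shift_inv_denom.
pose corner j := shift2 (ucoef j) 1 1 a b * shift2 (ucoef j) 1 1 c d.
transitivity (\sum_(j < a.+2)
  (pascal (ucoef j) a b * pascal (ucoef j) c d - corner j)).
  do ![rewrite -sumrB | rewrite -big_split /=]; apply: eq_bigr => j _.
  by rewrite /corner /pascal !shift2_00; ring.
rewrite big_ord_recl !pascal_ucoef0.
under eq_bigr => j _ do rewrite lift0 !pascal_ucoefS.
rewrite telescope_ord addrA subrK.
have corner_last : shift2 (ucoef a.+1) 1 1 a b = 0.
  by rewrite /shift2; case: ifP => // _; apply: ucoef_ltl; lia.
rewrite /corner corner_last mul0r subr0 /s_one.
by case: (a == 0%N); case: (b == 0%N); case: (c == 0%N); case: (d == 0%N);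
  rewrite /= ?mulr0 ?mul0r ?mulr1.
Qed.

(* The diagonal coefficients of G are the Apéry numbers (k = n - j). *)
Lemma inv_denom_diag n : inv_denom n n n n = (apery n)%:Z.
Proof.
rewrite /inv_denom /apery big_mkord -natz natr_sum (reindex_inj rev_ord_inj) /=.
apply: eq_bigr => k _; have le_kn : (k <= n)%N by rewrite -ltnS.
rewrite subSS /ucoef leq_subr /= subKn // /trinom subnKC //.
have -> : (k + k + (n - k) = n + k)%N by lia.
by rewrite natz -!PoszM; congr Posz; ring.
Qed.

Theorem theorem1p1 :
  (exists F : series4, s_mul denom F = s_one) /\
  (forall F : series4, s_mul denom F = s_one ->
     forall n : nat, F n n n n = ((apery n)%:Z)%R).
Proof.
split; first by exists inv_denom; exact: denom_mul_inv_denom.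
move=> F denomF n; rewrite -inv_denom_diag; apply/eqP; rewrite -subr_eq0; apply/eqP.
apply: (@denom_mul_eq0 (s_sub F inv_denom)) => a b c d.
by rewrite /s_sub s_mulDr s_mulNr denomF denom_mul_inv_denom /s_add /s_opp subrr.
Qed.
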